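(* For every $x\in\mathbb{N}$, every subsystem state $\psi^A_W$ belonging to $M_{C(x)}$ has the property that some node of $W$ is reachable by a directed path within $D[W]$ from every other node of $W$.
   Context: $D=(V,A)$ is a directed graph on $V=\{1,\dots,N\}$ with rates $T_{ij}\ge0$, $T_{ij}>0$ iff $(j,i)\in A$, $T_{ii}=0$. A subsystem state is $\psi^A_W$ with $W\subseteq V$ nonempty, $A:W\to\{S,I,R\}$; $S_i,I_i$ are single-node states; for $n\notin W$, $\psi^A_WI_n$ is the state on $W\cup\{n\}$ extending $A$ with $n$ in state $I$; $h^X_k(\psi^A_W)$ changes the state of $k\in W$ to $X$. $\mathrm{IN}_a(X)$ ($a\in\mathbb{N}=\{0,1,\dots\}$) is the set of nodes that can reach some member of $X$ by traversing at most $a$ arcs. For disjoint nonempty $X,Y\subset V$ and $i\notin X\cup Y$, $f_{C(x)}(X,Y,i)=1$ iff $\mathrm{IN}_a(X)\cap\mathrm{IN}_b(Y)=\emptyset$ in $D-i$ for all $a,b\in\mathbb{N}$ with $a+b=x$, else $0$; by convention $f_{C(x)}(\{n\},\emptyset,\{k\})=0$. For a $\{0,1\}$-valued function $f$, a state $\psi^A_W$ with $A:W\to\{S,I\}$ induces: $\psi^A_W$; $h^S_k(\psi^A_W)$ for $k\in W$ with $A_k=I$ and $T_{kn}>0$ for some $n\in W$ with $A_n=I$; and for each $k\in W$, $n\in V\setminus W$ with $T_{kn}>0$: the state $h^S_k(\psi^A_W)I_n$ if $f(\{n\},W\setminus\{k\},\{k\})=0$, or the states $h^S_k(\psi^A_W)$,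 $S_kI_n$, $S_k$ if it equals $1$. $M_f$ is the smallest set of subsystem states containing all $S_i,I_i$ and closed under induced states; $M_{C(x)}=M_{f_{C(x)}}$. $D[W]$ is the subgraph induced on $W$. *)

From HB Require Import structures.
From mathcomp Require Import all_boot all_order all_algebra.
Set Implicit Arguments. Unset Strict Implicit. Unset Printing Implicit Defensive.
Import Order.TTheory GRing.Theory Num.Theory.

(* Nodes V = {1,...,N} are represented by 'I_N. *)

(* Arc relation induced by the rate matrix: (j,i) in A  iff  T_{ij} > 0.
   [arcT T j i] means there is an arc from j to i. *)
Definition arcT (R : realFieldType) (N : nat) (T : 'M[R]_N) : rel 'I_N :=
  fun j i => (0 < T i j)%R.

Inductive sir := St | It | Rt.

(* A subsystem state psi^A_W is a partial map V -> {S,I,R};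
   W is its domain (the nodes mapped to Some _). *)
Definition sstate (N : nat) := {ffun 'I_N -> option sir}.

Definition dom (N : nat) (s : sstate N) : {set 'I_N} := [set i | isSome (s i)].

Definition single (N : nat) (i : 'I_N) (X : sir) : sstate N :=
  [ffun j => if j == i then Some X else None].

(* set the state of node k to X (h^X_k when k \in W;
   psi I_n when k = n \notin W and X = I). *)
Definition hset (N : nat) (s : sstate N) (k : 'I_N) (X : sir) : sstate N :=
  [ffun j => if j == k then Some X else s j].

Definition pairSI (N : nat) (k n : 'I_N) : sstate N :=
  [ffun j => if j == k then Some St else if j == n then Some It else None].

Definition noR (N : nat) (s : sstate N) : Prop := forall i, s i <> Some Rt.

(* IN_a(X) in D - i : the nodes of D - i that can reach some member of X
   traversing at most a arcs (within D - i). *)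
Fixpoint INs (N : nat) (arc : rel 'I_N) (a : nat) (X : {set 'I_N}) (i : 'I_N)
  : {set 'I_N} :=
  match a with
  | 0 => X :\ i
  | a'.+1 => let P := INs arc a' X i in
             P :|: [set v | (v != i) && [exists u in P, arc v u]]
  end.

(* f_{C(x)}(X,Y,i); with the convention that it is 0 when Y is empty. *)
Definition fC (N : nat) (arc : rel 'I_N) (x : nat)
  (X Y : {set 'I_N}) (i : 'I_N) : bool :=
  (Y != set0) &&
  [forall a : 'I_x.+1, [disjoint INs arc a X i & INs arc (x - a) Y i]].

(* M_f: smallest set of subsystem states containing all S_i, I_i and closed
   under induced states (taking s itself as induced state is vacuous). *)
Inductive inM (N : nat) (arc : rel 'I_N)
  (f : {set 'I_N} -> {set 'I_N} -> 'I_N -> bool) : sstate N -> Prop :=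
| M_S i : inM arc f (single i St)
| M_I i : inM arc f (single i It)
| M_infect s k n :
    inM arc f s -> noR s -> s k = Some It -> s n = Some It -> arc n k ->
    inM arc f (hset s k St)
| M_ext0 s k n :
    inM arc f s -> noR s -> k \in dom s -> n \notin dom s -> arc n k ->
    f [set n] (dom s :\ k) k = false ->
    inM arc f (hset (hset s k St) n It)
| M_ext1a s k n :
    inM arc f s -> noR s -> k \in dom s -> n \notin dom s -> arc n k ->
    f [set n] (dom s :\ k) k = true ->
    inM arc f (hset s k St)
| M_ext1b s k n :
    inM arc f s -> noR s -> k \in dom s -> n \notin dom s -> arc n k ->
    f [set n] (dom s :\ k) k = true ->
    inM arc f (pairSI k n)
| M_ext1c s k n :
    inM arc f s -> noR s -> k \in dom s -> n \notin dom s -> arc n k ->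
    f [set n] (dom s :\ k) k = true ->
    inM arc f (single k St).

Definition inducedArc (N : nat) (arc : rel 'I_N) (W : {set 'I_N}) : rel 'I_N :=
  fun u v => [&& u \in W, v \in W & arc u v].

(* Every generating rule either keeps the set of nodes W of a state (it only
   changes the labels of nodes already in W), produces a one- or two-node
   state {k, n} with an arc n -> k, or adds a single node n outside W together
   with an arc from n to some k in W.  Hence a node r of W reachable inside
   D[W] from all of W stays such a node after every rule, and the claim
   follows by induction on the derivation.  In particular neither the rates
   nor the function f_C(x) play any role. *)

From HB Require Import structures.
From mathcomp Require Import all_boot all_order all_algebra.
Import Order.TTheory GRing.Theory Num.Theory.

Set Implicit Arguments.
Unset Strict Implicit.
Unset Printing Implicit Defensive.

Section Rooted.

Variables (N : nat) (arc : rel 'I_N).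

Definition rooted (W : {set 'I_N}) : Prop :=
  exists2 r, r \in W & forall w, w \in W -> connect (inducedArc arc W) w r.

Lemma connect_induced_sub (W W' : {set 'I_N}) w r :
  W \subset W' -> connect (inducedArc arc W) w r ->
  connect (inducedArc arc W') w r.
Proof.
move=> sWW'; apply: connect_sub => u v /and3P [uW vW uv].
by apply: connect1; apply/and3P; split; rewrite ?(subsetP sWW').
Qed.

Lemma rooted_set1 i : rooted [set i].
Proof. by exists i; rewrite ?set11 // => w /set1P ->. Qed.

Lemma rooted_setU1 (W : {set 'I_N}) k n :
  rooted W -> k \in W -> arc n k -> rooted (n |: W).
Proof.
move=> [r rW reach_r] kW nk; exists r; first by rewrite setU1r.
have sW : W \subset n |: W by apply/subsetP=> y; apply: setU1r.
move=> w /setU1P [->|wW]; last exact: connect_induced_sub (reach_r w wW).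
have n_to_k : inducedArc arc (n |: W) n k.
  by apply/and3P; split; rewrite ?setU11 ?setU1r.
exact: connect_trans (connect1 n_to_k) (connect_induced_sub sW (reach_r k kW)).
Qed.

Lemma rooted_set2 k n : arc n k -> rooted [set k; n].
Proof.
move=> nk; rewrite setUC; apply: rooted_setU1 nk; first exact: rooted_set1.
exact: set11.
Qed.

End Rooted.

Lemma dom_single N (i : 'I_N) X : dom (single i X) = [set i].
Proof. by apply/setP=> j; rewrite !inE ffunE; case: (j == i). Qed.

Lemma dom_hset N (s : sstate N) k X : dom (hset s k X) = k |: dom s.
Proof. by apply/setP=> j; rewrite !inE ffunE; case: (j == k). Qed.

Lemma dom_hset_in N (s : sstate N) k X : k \in dom s -> dom (hset s k X) = dom s.
Proof. by move=> ks; rewrite dom_hset; apply/setUidPr; rewrite sub1set. Qed.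

Lemma dom_pairSI N (k n : 'I_N) : dom (pairSI k n) = [set k; n].
Proof.
by apply/setP=> j; rewrite !inE ffunE; case: (j == k) => //; case: (j == n).
Qed.

Lemma inM_rooted N (arc : rel 'I_N) f s : inM arc f s -> rooted arc (dom s).
Proof.
elim=> {s} [i|i|s k n _ IHs _ sk _ _|s k n _ IHs _ ks _ nk _|s k n _ IHs _ ks _ _ _
           |s k n _ _ _ _ _ nk _|s k n _ _ _ _ _ _ _].
- by rewrite dom_single; apply: rooted_set1.
- by rewrite dom_single; apply: rooted_set1.
- by rewrite dom_hset_in // inE sk.
- by rewrite dom_hset dom_hset_in //; apply: rooted_setU1 nk.
- by rewrite dom_hset_in.
- by rewrite dom_pairSI; apply: rooted_set2.
- by rewrite dom_single; apply: rooted_set1.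
Qed.

Theorem mainTheorem11 (R : realFieldType) (N : nat) (T : 'M[R]_N)
  (HTnn : forall i j, (0 <= T i j)%R) (HTdiag : forall i, T i i = 0%R)
  (x : nat) (s : sstate N) :
  inM (arcT T) (fC (arcT T) x) s ->
  exists2 r, r \in dom s &
    forall w, w \in dom s -> connect (inducedArc (arcT T) (dom s)) w r.
Proof. exact: inM_rooted. Qed.
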